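(* Let $\Omega\subset\mathbb{R}^n$ be a domain and let $\mathcal{X}(\Omega)$ be a normed space of measurable functions on $\Omega$ satisfying properties (i) and (ii) below. Let $f\in\mathcal{X}(\Omega)$ and put $$\mu(\rho)=\sup_{x\in\Omega}\|f\|_{\mathcal{X},B_\rho(x)\cap\Omega}.$$ Then $\mu(\rho)\to0$ as $\rho\to0$.
   Context: For $\Omega_1\subset\Omega$ one sets $\|f\|_{\mathcal{X},\Omega_1}=\|f\chi_{\Omega_1}\|_{\mathcal{X},\Omega}$, where $\chi_{\Omega_1}$ is the characteristic function of $\Omega_1$. Properties of $\mathcal{X}(\Omega)$: - (i) If $g$ is measurable, $f\in\mathcal{X}(\Omega)$ and $|g|\le|f|$, then $g\in\mathcal{X}(\Omega)$ and $\|g\|_{\mathcal{X},\Omega}\le\|f\|_{\mathcal{X},\Omega}$. - (ii) If $f_k\in\mathcal{X}(\Omega)$ and $f_k\searrow0$ a.e., then $\|f_k\|_{\mathcal{X},\Omega}\to0$. *)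

From HB Require Import structures.
From mathcomp Require Import all_boot all_order all_algebra.
From mathcomp Require Import all_classical all_reals all_analysis.
Set Implicit Arguments. Unset Strict Implicit. Unset Printing Implicit Defensive.
Import Order.TTheory GRing.Theory Num.Theory.
Import numFieldNormedType.Exports.
Local Open Scope classical_set_scope.
Local Open Scope ring_scope.

Section Leb.
Variables (R : realType) (n : nat).

Definition box (a b : 'rV[R]_n) : set 'rV[R]_n :=
  [set x | forall i : 'I_n, a ord0 i <= x ord0 i <= b ord0 i].

Definition box_vol (a b : 'rV[R]_n) : R :=
  \prod_(i < n) Num.max (b ord0 i - a ord0 i) 0.

Definition leb_outer (A : set 'rV[R]_n) : \bar R :=
  ereal_inf [set s : \bar R | exists a b : nat -> 'rV[R]_n,
     A `<=` \bigcup_k box (a k) (b k) /\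
     s = (\sum_(k <oo) (box_vol (a k) (b k))%:E)%E].

Definition leb_measurable (A : set 'rV[R]_n) : Prop :=
  forall E : set 'rV[R]_n,
    leb_outer E = (leb_outer (E `&` A) + leb_outer (E `&` ~` A))%E.

Definition leb_null (A : set 'rV[R]_n) : Prop := leb_outer A = 0%E.

Definition leb_measurable_fun (D : set 'rV[R]_n) (g : 'rV[R]_n -> R) : Prop :=
  forall a : R, leb_measurable (D `&` [set x | a < g x]).

Definition ae_on (D : set 'rV[R]_n) (P : 'rV[R]_n -> Prop) : Prop :=
  exists N : set 'rV[R]_n, leb_null N /\ forall x, D x -> ~ N x -> P x.

Definition eball (x : 'rV[R]_n) (rho : R) : set 'rV[R]_n :=
  [set y | \sum_(i < n) (y ord0 i - x ord0 i) ^+ 2 < rho ^+ 2].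

Definition restr_norm (N : ('rV[R]_n -> R) -> R) (Om1 : set 'rV[R]_n)
  (f : 'rV[R]_n -> R) : R := N (fun x => \1_Om1 x * f x).

(* X(Omega) with N is a normed space of measurable functions on Omega
   (functions identified when equal a.e. on Omega) *)
Definition normed_function_space (Om : set 'rV[R]_n)
  (X : set ('rV[R]_n -> R)) (N : ('rV[R]_n -> R) -> R) : Prop :=
  (forall f, X f -> leb_measurable_fun Om f) /\
  X (fun _ => 0) /\
  (forall f g, X f -> X g -> X (fun x => f x + g x)) /\
  (forall (c : R) f, X f -> X (fun x => c * f x)) /\
  (forall (c : R) f, X f -> N (fun x => c * f x) = `|c| * N f) /\
  (forall f g, X f -> X g -> N (fun x => f x + g x) <= N f + N g) /\
  (forall f, X f -> (N f = 0 <-> ae_on Om (fun x => f x = 0))).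

Definition lattice_property (Om : set 'rV[R]_n)
  (X : set ('rV[R]_n -> R)) (N : ('rV[R]_n -> R) -> R) : Prop :=
  forall f g, X f -> leb_measurable_fun Om g ->
    (forall x, Om x -> `|g x| <= `|f x|) -> X g /\ N g <= N f.

Definition abs_cont_norm (Om : set 'rV[R]_n)
  (X : set ('rV[R]_n -> R)) (N : ('rV[R]_n -> R) -> R) : Prop :=
  forall fk : nat -> 'rV[R]_n -> R, (forall k, X (fk k)) ->
    ae_on Om (fun x => (forall k, fk k.+1 x <= fk k x) /\ (fk ^~ x) @ \oo --> (0:R)) ->
    (fun k => N (fk k)) @ \oo --> (0:R).

End Leb.

From HB Require Import structures.
From mathcomp Require Import all_boot all_order all_algebra.
From mathcomp Require Import all_classical all_reals all_analysis.
From mathcomp Require Import lra measurable_realfun.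
Set Implicit Arguments. Unset Strict Implicit. Unset Printing Implicit Defensive.
Import Order.TTheory GRing.Theory Num.Theory.
Import numFieldNormedType.Exports.
Local Open Scope classical_set_scope.
Local Open Scope ring_scope.

(** The proof is a compactness argument. By property (ii), the norm of
    [1_(C_k ∩ Om) |f|] tends to 0 along any decreasing sequence of measurable
    sets [C_k] with null intersection, and by property (i) it dominates the
    norm of [f] restricted to any [B ∩ Om] with [B ⊆ C_k]. Applied to shrinking
    cubes around a point [y], this makes the norm of [f] small on every
    Euclidean ball of small radius centred near [y]; applied to the complements
    of the cubes [[-m, m]^n], it makes it small on every ball far from the
    origin. Finitely many neighbourhoods cover the compact cube
    [[-m-1, m+1]^n], which gives a radius that works for all centres at once. *)

Lemma box_vol_ge0 (R : realType) n (a b : 'rV[R]_n) : 0 <= box_vol a b.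
Proof. by apply: prodr_ge0 => i _; rewrite le_max lexx orbT. Qed.

Lemma box_vol_diag (R : realType) n (a : 'rV[R]_n.+1) : box_vol a a = 0.
Proof. by rewrite /box_vol big_ord_recl subrr maxxx mul0r. Qed.

Section leb_outer_measure.
Variables (R : realType) (n : nat).
Local Notation V := 'rV[R]_n.+1.
Local Notation leb_outer := (@leb_outer R n.+1).

Local Open Scope ereal_scope.

(* Every set is measurable in [g_sigma_algebraType setT], so [mu_ext] below
   may cover by arbitrary sets. *)
Definition enclosing_box_vol (A : set (g_sigma_algebraType (@setT (set V))))
  : \bar R :=
  ereal_inf [set x | exists a b, A `<=` box a b /\ x = (box_vol a b)%:E].

Lemma enclosing_box_vol_ge0 A : 0 <= enclosing_box_vol A.
Proof. by apply: le_ereal_inf_tmp => _ [a [b [_ ->]]]; rewrite lee_fin box_vol_ge0. Qed.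

Lemma enclosing_box_vol_le A a b : A `<=` box a b ->
  enclosing_box_vol A <= (box_vol a b)%:E.
Proof. by move=> Aab; apply: ereal_inf_lbound; exists a, b. Qed.

Lemma enclosing_box_vol0 : enclosing_box_vol set0 = 0.
Proof.
apply/eqP; rewrite eq_le enclosing_box_vol_ge0 andbT.
by apply: le_trans (@enclosing_box_vol_le set0 0 0 (sub0set _)) _; rewrite box_vol_diag.
Qed.

Lemma mu_ext_le_leb_outer (A : set V) : mu_ext enclosing_box_vol A <= leb_outer A.
Proof.
apply: le_ereal_inf_tmp => _ [a [b [Acov ->]]].
apply: (@le_trans _ _ (\sum_(k <oo) enclosing_box_vol (box (a k) (b k)))).
  apply: ereal_inf_lbound; exists (fun k => box (a k) (b k)) => //; split => //.
  by move=> k; exact: sub_sigma_algebra.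
apply: lee_nneseries => [k _ _|k _]; first exact: enclosing_box_vol_ge0.
exact: enclosing_box_vol_le.
Qed.

Lemma leb_outer_le_mu_ext (A : set V) : leb_outer A <= mu_ext enclosing_box_vol A.
Proof.
apply: le_ereal_inf_tmp => _ [F [_ AF] <-].
have [[k Fk]|/forallNP Fk] := pselect (exists k, enclosing_box_vol (F k) = +oo).
  rewrite (eseries_pinfty _ _ Fk) ?leey // => m _.
  by rewrite gt_eqF // (lt_le_trans _ (enclosing_box_vol_ge0 _)) ?ltNyr.
apply/lee_addgt0Pr => e e0.
have /choice[ab Hab] : forall k, exists ab : V * V, F k `<=` box ab.1 ab.2 /\
    (box_vol ab.1 ab.2)%:E < enclosing_box_vol (F k) + (e / (2 ^ k.+1)%:R)%:E.
  move=> k.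
  have fk : enclosing_box_vol (F k) \is a fin_num.
    by rewrite ge0_fin_numE ?enclosing_box_vol_ge0 // ltey; exact/eqP/Fk.
  have ek : (0 < e / (2 ^ k.+1)%:R)%R by rewrite divr_gt0 // ltr0n expn_gt0.
  have [_ [a [b [Fab ->]]] ab_lt] := lb_ereal_inf_adherent ek fk.
  by exists (a, b).
apply: (@le_trans _ _ (\sum_(k <oo) (box_vol (ab k).1 (ab k).2)%:E)).
  apply: ereal_inf_lbound; exists (fun k => (ab k).1), (fun k => (ab k).2).
  by split=> // x /AF [k _ Fkx]; exists k => //; exact: (Hab k).1.
apply: le_trans (epsilon_trick _ _ _); last 2 first.
- by move=> k; exact: enclosing_box_vol_ge0.
- exact: ltW.
apply: lee_nneseries => [k _ _|k _]; first by rewrite lee_fin box_vol_ge0.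
exact/ltW/(Hab k).2.
Qed.

(* This identification supplies the outer-measure axioms of [leb_outer]. *)
Lemma leb_outer_mu_ext (A : set V) : leb_outer A = mu_ext enclosing_box_vol A.
Proof.
by apply/eqP; rewrite eq_le leb_outer_le_mu_ext mu_ext_le_leb_outer.
Qed.

Lemma leb_outer0 : leb_outer set0 = 0.
Proof.
rewrite leb_outer_mu_ext mu_ext0 //; first exact: enclosing_box_vol0.
exact: enclosing_box_vol_ge0.
Qed.

Lemma leb_outer_ge0 (A : set V) : 0 <= leb_outer A.
Proof. by rewrite leb_outer_mu_ext; apply: mu_ext_ge0; exact: enclosing_box_vol_ge0. Qed.

Lemma le_leb_outer : {homo leb_outer : A B / A `<=` B >-> A <= B}.
Proof. by move=> A B AB; rewrite !leb_outer_mu_ext; exact: le_mu_ext. Qed.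

Lemma leb_outer_sigma_subadditive : sigma_subadditive leb_outer.
Proof.
move=> F; rewrite leb_outer_mu_ext.
under eq_eseriesr do rewrite leb_outer_mu_ext.
by apply: mu_ext_sigma_subadditive; exact: enclosing_box_vol_ge0.
Qed.

HB.instance Definition _ := isOuterMeasure.Build R V leb_outer
  leb_outer0 leb_outer_ge0 le_leb_outer leb_outer_sigma_subadditive.

Lemma leb_null_set1 (y : V) : leb_null [set y].
Proof.
apply/eqP; rewrite eq_le leb_outer_ge0 andbT.
apply: ereal_inf_lbound; exists (fun _ => y), (fun _ => y); split.
  by move=> z ->; exists 0%N => //= i; rewrite lexx.
by rewrite eseries0 // => k _ _; rewrite box_vol_diag.
Qed.

End leb_outer_measure.

Lemma itv_length_split (R : realType) (a b c : R) :
  Num.max (b - Num.max a c) 0 + Num.max (Num.min b c - a) 0 = Num.max (b - a) 0.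
Proof. by rewrite !maxEle !minEle; repeat case: ifPn; rewrite -?ltNge; lra. Qed.

Section half_space.
Variables (R : realType) (n : nat).
Local Notation V := 'rV[R]_n.+1.

Definition set_coord (v : V) (i : 'I_n.+1) (x : R) : V :=
  \row_j (if j == i then x else v ord0 j).

Lemma box_vol_split (a b : V) i c :
  box_vol (set_coord a i (Num.max (a ord0 i) c)) b +
  box_vol a (set_coord b i (Num.min (b ord0 i) c)) = box_vol a b.
Proof.
rewrite /box_vol (bigD1 i) //= [in X in _ + X](bigD1 i) //= [in RHS](bigD1 i) //=.
rewrite !mxE eqxx -(@itv_length_split _ (a ord0 i) (b ord0 i) c) mulrDl.
by congr (_ * _ + _ * _); apply: eq_bigr => j /negbTE ji; rewrite !mxE ji.
Qed.

(* Cutting each box of a cover along the hyperplane [z_i = c] splits its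
   volume exactly, which is Caratheodory's criterion for the half-space. *)
Lemma leb_measurable_coord_gt i c : leb_measurable [set z : V | c < z ord0 i].
Proof.
apply: le_caratheodory_measurable => E.
apply: le_ereal_inf_tmp => _ [a [b [Ecov ->]]].
pose a' k := set_coord (a k) i (Num.max (a k ord0 i) c).
pose b' k := set_coord (b k) i (Num.min (b k ord0 i) c).
apply: (@le_trans _ _ ((\sum_(k <oo) (box_vol (a' k) (b k))%:E) +
                       (\sum_(k <oo) (box_vol (a k) (b' k))%:E))%E).
  apply: leeD; apply: ereal_inf_lbound.
  - exists a', b; split => // z [/Ecov [k _ zk] /= cz]; exists k => // j.
    rewrite !mxE; case: eqP => [->|_]; last exact: zk.
    by case/andP: (zk i) => az zb; rewrite ge_max az zb ltW.
  - exists a, b'; split => // z [/Ecov [k _ zk] /= /negP]; rewrite -leNgt => zc.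
    exists k => // j; rewrite !mxE; case: eqP => [->|_]; last exact: zk.
    by case/andP: (zk i) => az zb; rewrite le_min az zb zc.
rewrite -nneseriesD => [|k _|k _]; last 2 first.
- by rewrite lee_fin box_vol_ge0.
- by rewrite lee_fin box_vol_ge0.
apply: lee_nneseries => [k _ _|k _]; first by rewrite adde_ge0 // lee_fin box_vol_ge0.
by rewrite -EFinD box_vol_split.
Qed.

End half_space.

Section leb_measurable_sets.
Variables (R : realType) (n : nat).
Local Notation V := 'rV[R]_n.+1.
(* [leb_measurable] is Caratheodory measurability for [leb_outer], so the
   measurable sets of [LT] are exactly the Lebesgue measurable sets. *)
Local Notation LT := (caratheodory_type (@leb_outer R n.+1)).

Lemma leb_measurable_funP (D : set LT) (f : LT -> R) : measurable D ->
  measurable_fun D f <-> leb_measurable_fun D f.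
Proof.
move=> mD; split => [mf a|mf].
  by rewrite -preimage_itvoy; apply: mf => //; exact: measurable_itv.
apply: (measurability _ (RGenOInfty.measurableE R)) => // _ [_ [a ->] <-].
by rewrite preimage_itvoy; exact: mf.
Qed.

Lemma measurable_coord i : measurable_fun setT (fun z : LT => z ord0 i).
Proof.
apply/leb_measurable_funP => // c; rewrite setTI.
exact: leb_measurable_coord_gt.
Qed.

Lemma leb_measurable_eball (x : V) rho : leb_measurable (eball x rho).
Proof.
change (measurable (eball x rho : set LT)).
pose d2 (z : LT) := \sum_(i < n.+1) (z ord0 i - x ord0 i) ^+ 2.
have md2 : measurable_fun setT d2.
  apply: (@measurable_sum _ LT R setT _ (index_enum 'I_n.+1)) => i.
  apply: measurable_funX; apply: measurable_funB; first exact: measurable_coord.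
  exact: measurable_cst.
rewrite [X in measurable X](_ : _ = setT `&` d2 @^-1` `]-oo, rho ^+ 2[).
  exact: md2 (measurable_itv _).
by apply/seteqP; split => z; rewrite /= in_itv /=; [move=> ?; split|case].
Qed.

Lemma measurable_coord_dist_lt (y : V) r i :
  measurable [set z : LT | `|y ord0 i - z ord0 i| < r].
Proof.
pose d (z : LT) := `|y ord0 i - z ord0 i|.
have md : measurable_fun setT d.
  apply: measurableT_comp => //; apply: measurable_funB; last exact: measurable_coord.
  exact: measurable_cst.
rewrite [X in measurable X](_ : _ = setT `&` d @^-1` `]-oo, r[).
  exact: md (measurable_itv _).
by apply/seteqP; split => z; rewrite /= in_itv /=; [move=> ?; split|case].
Qed.

Lemma leb_measurable_ball (y : V) r : leb_measurable (ball y r).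
Proof.
change (measurable (ball y r : set LT)).
have [r0|r0] := ltP 0 r; last first.
  by rewrite (_ : ball y r = set0) // -subset0 => z [/lt_le_trans/(_ r0)]; rewrite ltxx.
rewrite [X in measurable X](_ : _ =
    \bigcap_(i in setT) [set z : LT | `|y ord0 i - z ord0 i| < r]).
  apply: fin_bigcap_measurable => [|i _]; first exact: finite_finset.
  exact: measurable_coord_dist_lt.
apply/seteqP; split => [z [_ yz] i _|z yz]; first exact: yz.
by split => // i j; rewrite ord1; exact: yz.
Qed.

(* On row vectors, [ball] is the ball of the max norm, an open cube. *)
Lemma eball_sub_ball (x : V) rho : 0 < rho -> eball x rho `<=` ball x rho.
Proof.
move=> rho0 z xz; split => // i j; rewrite ord1 /ball /= distrC.
have : (z ord0 j - x ord0 j) ^+ 2 < rho ^+ 2.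
  apply: le_lt_trans xz; rewrite (bigD1 j) //= lerDl.
  by apply: sumr_ge0 => k _; exact: sqr_ge0.
by rewrite -real_normK ?num_real // ltr_pXn2r // nnegrE ltW.
Qed.

Lemma bigcap_ball_invS (y : V) : \bigcap_k ball y k.+1%:R^-1 = [set y].
Proof.
apply/seteqP; split => [z yz|_ ->]; last by move=> k _; apply: ballxx.
apply/rowP => j; apply/eqP; rewrite -subr_eq0 -normr_le0 distrC leNgt.
apply/negP => /ltr_add_invr[k]; rewrite add0r.
have [_ /(_ ord0 j) yzk] := yz k I.
by move/(lt_trans yzk); rewrite ltxx.
Qed.

Definition cube (M : R) : set V := [set v | forall i, v ord0 i \in `[- M, M]].

Lemma cubeE M (v : V) : cube M v <-> forall i, `|v ord0 i| <= M.
Proof. by split => h i; have := h i; rewrite in_itv /= ler_norml. Qed.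

Lemma compact_cube M : compact (cube M).
Proof. by apply: (@rV_compact _ _ (fun=> `[- M, M]%classic)) => i; exact: segment_compact. Qed.

Lemma leb_measurable_cube M : leb_measurable (cube M).
Proof.
change (measurable (cube M : set LT)).
rewrite [X in measurable X](_ : _ = \bigcap_(i in setT)
    (setT `&` (fun z : LT => z ord0 i) @^-1` `[- M, M])).
  apply: fin_bigcap_measurable => [|i _]; first exact: finite_finset.
  exact: measurable_coord (measurable_itv _).
apply/seteqP; split => [v vM i _|v vM i]; first by split; [|exact: vM].
by have [] := vM i I.
Qed.

Lemma le_cube M1 M2 : M1 <= M2 -> cube M1 `<=` cube M2.
Proof. by move=> M12 v /cubeE vM; apply/cubeE => i; exact: le_trans (vM i) M12. Qed.

Lemma bigcap_cube_compl : \bigcap_m ~` cube m%:R = set0.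
Proof.
apply/seteqP; split => // v /(_ (Num.Def.archi_bound (\sum_i `|v ord0 i|)) I); apply.
apply/cubeE => i; apply/ltW/(le_lt_trans (y := \sum_i `|v ord0 i|)).
  by rewrite (bigD1 i) //= lerDl; apply: sumr_ge0.
by apply: archi_boundP; apply: sumr_ge0.
Qed.

Lemma ball_sub_cube_compl (x : V) M rho : ~ cube (M + 1) x -> rho <= 1 ->
  ball x rho `<=` ~` cube M.
Proof.
move=> /cubeE /existsNP[i /negP]; rewrite -ltNge => Mxi rho1 z [_ xz] /cubeE /(_ i) zM.
have := xz ord0 i; rewrite /ball /= => xzi.
have := ler_normD (x ord0 i - z ord0 i) (z ord0 i); rewrite subrK; lra.
Qed.

End leb_measurable_sets.

Section normed_function_space.
Variables (R : realType) (n : nat) (Om : set 'rV[R]_n).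
Variables (X : set ('rV[R]_n -> R)) (N : ('rV[R]_n -> R) -> R).
Hypothesis hN : normed_function_space Om X N.

Lemma normed_function_space_ge0 g : X g -> 0 <= N g.
Proof.
case: hN => _ [_ [_ [Xsc [Nsc [Ntri _]]]]] Xg.
have := Ntri g _ Xg (Xsc (-1) g Xg).
have -> : (fun x => g x + -1 * g x) = (fun x => 0 * g x).
  by apply/funext => x; rewrite mulN1r mul0r subrr.
rewrite !Nsc // normr0 normrN normr1; lra.
Qed.

Lemma leb_measurable_dom : leb_measurable Om.
Proof.
case: hN => mX [X0 _].
suff -> : Om = Om `&` [set x | -1 < (fun _ => 0 : R) x] by exact: mX X0 (-1).
by apply/seteqP; split => [x Omx|x []] //=; split; rewrite // ltrN10.
Qed.

End normed_function_space.

Lemma indic_le (R : realType) (T : Type) (A B : set T) z : A `<=` B ->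
  \1_A z <= \1_B z :> R.
Proof.
move=> AB; rewrite !indicE; have [zA|] := boolP (z \in A); last by case: (_ \in B).
by rewrite mem_set //; apply: AB; exact: set_mem.
Qed.

Section truncation.
Variables (R : realType) (n : nat).
Local Notation V := 'rV[R]_n.+1.
Local Notation LT := (caratheodory_type (@leb_outer R n.+1)).
Variables (Om : set V) (X : set (V -> R)) (N : (V -> R) -> R).
Hypotheses (hN : normed_function_space Om X N) (hL : lattice_property Om X N)
  (hA : abs_cont_norm Om X N).
Variable f : V -> R.
Hypothesis Xf : X f.

Local Notation absf := (fun z => `|f z|).

Let mOm : measurable (Om : set LT) := leb_measurable_dom hN.

Lemma leb_measurable_fun_indicM (C : set V) (g : V -> R) : leb_measurable C ->
  leb_measurable_fun Om g -> leb_measurable_fun Om (fun z => \1_C z * g z).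
Proof.
move=> mC /(leb_measurable_funP _ mOm) mg; apply/(leb_measurable_funP _ mOm).
by apply: measurable_funM mg; apply: measurable_indic; exact: mC.
Qed.

Lemma leb_measurable_fun_normr (g : V -> R) :
  leb_measurable_fun Om g -> leb_measurable_fun Om (fun z => `|g z|).
Proof.
move=> /(leb_measurable_funP _ mOm) mg; apply/(leb_measurable_funP _ mOm).
exact: measurableT_comp mg.
Qed.

Lemma leb_measurable_fun_f : leb_measurable_fun Om f.
Proof. by case: hN => mX _; exact: mX. Qed.

Lemma X_normr_f : X absf.
Proof.
have [] // := hL Xf (leb_measurable_fun_normr leb_measurable_fun_f).
by move=> z _; rewrite normr_id.
Qed.

Lemma indic_mul_norm_le (B : set V) (g : V -> R) z :
  `|\1_B z * g z| <= `|g z|.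
Proof.
by rewrite normrM indicE; case: (z \in B); rewrite ?normr1 ?normr0 ?mul1r ?mul0r.
Qed.

Lemma X_restr_normr (C : set V) : leb_measurable C ->
  X (fun z => \1_(C `&` Om) z * `|f z|).
Proof.
move=> mC; have [] // := hL X_normr_f
  (leb_measurable_fun_indicM (caratheodory_measurable_setI mC mOm)
    (leb_measurable_fun_normr leb_measurable_fun_f)).
by move=> z _; apply: le_trans (indic_mul_norm_le _ absf z) _.
Qed.

Lemma restr_norm_le_normr (B C : set V) : leb_measurable B -> leb_measurable C ->
  B `<=` C -> restr_norm N (B `&` Om) f <= restr_norm N (C `&` Om) absf.
Proof.
move=> mB mC BC; have [] // := hL (X_restr_normr mC)
  (leb_measurable_fun_indicM (caratheodory_measurable_setI mB mOm) leb_measurable_fun_f).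
move=> z _; rewrite !normrM normr_id ler_wpM2r //.
by rewrite !ger0_norm ?indic_ge0 // indic_le // => y [/BC].
Qed.

Lemma restr_norm_ge0 (B : set V) : leb_measurable B -> 0 <= restr_norm N (B `&` Om) f.
Proof.
move=> mB; apply: (normed_function_space_ge0 hN).
have [] // := hL Xf (leb_measurable_fun_indicM (caratheodory_measurable_setI mB mOm)
  leb_measurable_fun_f).
by move=> z _; exact: indic_mul_norm_le.
Qed.

Lemma restr_norm_normr_cvg0 (C : nat -> set V) :
  (forall k, leb_measurable (C k)) -> (forall k m, (k <= m)%N -> C m `<=` C k) ->
  leb_null (\bigcap_k C k) ->
  (fun k => restr_norm N (C k `&` Om) absf) @ \oo --> 0.
Proof.
move=> mC decC nullC; apply: hA => [k|]; first exact: X_restr_normr.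
exists (\bigcap_k C k); split => // z _ notCz.
have [k nCkz] : exists k, ~ C k z.
  by apply/existsNP => Cz; apply: notCz => k _; exact: Cz.
split=> [j|].
  rewrite ler_wpM2r // indic_le // => y [Cy Omy]; split => //.
  exact: decC (leqnSn j) _ Cy.
apply: cvg_near_cst; exists k => // m /= km.
by rewrite indicE memNset ?mul0r // => -[/(decC _ _ km)].
Qed.

Lemma restr_norm_ball_small (y : V) (e : R) : 0 < e ->
  exists2 r, 0 < r & restr_norm N (ball y r `&` Om) absf < e.
Proof.
move=> e0; have cvg0 := @restr_norm_normr_cvg0
  (fun k => ball y k.+1%:R^-1) (fun k => leb_measurable_ball _ _).
have [||K _ /(_ K (leqnn K)) /= small] := cvgr_lt 0 (cvg0 _ _) e e0.
- move=> k m km; apply: le_ball; by rewrite lef_pV2 ?posrE // ler_nat.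
- by rewrite bigcap_ball_invS; exact: leb_null_set1.
by exists K.+1%:R^-1; rewrite ?invr_gt0.
Qed.

Lemma restr_norm_cube_compl_small (e : R) : 0 < e ->
  exists m : nat, restr_norm N (~` cube m%:R `&` Om) absf < e.
Proof.
move=> e0; have cvg0 := @restr_norm_normr_cvg0 (fun m => ~` cube m%:R)
  (fun m => caratheodory_measurable_setC (leb_measurable_cube _)).
have [||m _ /(_ m (leqnn m)) /= small] := cvgr_lt 0 (cvg0 _ _) e e0.
- by move=> k m km; apply: subsetC; apply: le_cube; rewrite ler_nat.
- by rewrite bigcap_cube_compl; exact: leb_outer0.
by exists m.
Qed.

Lemma restr_norm_eball_small_near (y : V) (e : R) : 0 < e ->
  \forall x \near y & rho \near 0^'+, restr_norm N (eball x rho `&` Om) f <= e.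
Proof.
move=> e0; have [r r0 ball_small] := restr_norm_ball_small y e0.
have r20 : 0 < r / 2 by rewrite divr_gt0.
exists (ball y (r / 2), [set rho | 0 < rho < r / 2]).
  split; first exact: nbhsx_ballx.
  near=> rho; apply/andP; split; near: rho; [exact: nbhs_right_gt|exact: nbhs_right_lt].
move=> [x rho] [/= yx /andP[rho0 rhor]].
apply/ltW; apply: le_lt_trans ball_small; apply: restr_norm_le_normr.
- exact: leb_measurable_eball.
- exact: leb_measurable_ball.
move=> z /(eball_sub_ball rho0) xz; apply: le_ball (ball_triangle yx xz).
by rewrite [leRHS](splitr r) lerD2l ltW.
Unshelve. all: end_near.
Qed.

Lemma restr_norm_eball_small (e : R) : 0 < e ->
  \forall rho \near 0^'+, forall x : V, restr_norm N (eball x rho `&` Om) f <= e.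
Proof.
move=> e0; have [m far_small] := restr_norm_cube_compl_small e0.
have cube_small : \forall rho \near 0^'+,
    cube (m%:R + 1) `<=` (fun x => restr_norm N (eball x rho `&` Om) f <= e).
  apply: (compact_near_coveringP _).1 (@compact_cube R n (m%:R + 1)) R _
    (fun rho x => restr_norm N (eball x rho `&` Om) f <= e) _ _ => y _.
  exact: restr_norm_eball_small_near.
near=> rho => x.
have [Kx|nKx] := pselect (cube (m%:R + 1) x).
  by move: x Kx; near: rho.
have rho0 : 0 < rho by near: rho; exact: nbhs_right_gt.
have rho1 : rho <= 1 by near: rho; apply: nbhs_right_le; exact: ltr01.
apply/ltW; apply: le_lt_trans far_small; apply: restr_norm_le_normr.
- exact: leb_measurable_eball.
- exact: caratheodory_measurable_setC (leb_measurable_cube _).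
by move=> z /(eball_sub_ball rho0); apply: ball_sub_cube_compl.
Unshelve. all: end_near.
Qed.

End truncation.

(* In dimension 0 the volume of a box is an empty product, hence 1: no set is
   null, so no normed function space exists. *)
Lemma leb_outer_dim0_ge1 (R : realType) (A : set 'rV[R]_0) : (1 <= leb_outer A)%E.
Proof.
apply: le_ereal_inf_tmp => _ [a [b [_ ->]]].
apply: le_trans (nneseries_lim_ge 1 _); first by rewrite big_nat1 /box_vol big_ord0.
by move=> k _ _; rewrite /box_vol big_ord0 lee_fin ler01.
Qed.

Lemma normed_function_space_dim0 (R : realType) (Om : set 'rV[R]_0)
  (X : set ('rV[R]_0 -> R)) (N : ('rV[R]_0 -> R) -> R) :
  ~ normed_function_space Om X N.
Proof.
case=> _ [X0 [_ [_ [Nsc [_ Nae]]]]].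
have N0 : N (fun _ => 0) = 0.
  by have := Nsc 0 _ X0; rewrite normr0 !mul0r.
have [Z [nullZ _]] := (Nae _ X0).1 N0.
by have := leb_outer_dim0_ge1 Z; rewrite nullZ lee_fin ler10.
Qed.

Theorem lemma2p3 (R : realType) (n : nat) (Om : set 'rV[R]_n)
  (X : set ('rV[R]_n -> R)) (N : ('rV[R]_n -> R) -> R) :
  open Om -> connected Om -> Om !=set0 ->
  normed_function_space Om X N ->
  lattice_property Om X N ->
  abs_cont_norm Om X N ->
  forall f : 'rV[R]_n -> R, X f ->
  (fun rho : R => sup [set restr_norm N (eball x rho `&` Om) f | x in Om])
    @ 0^'+ --> (0:R).
Proof.
move=> _ _ [x0 Omx0] hN hL hA f Xf.
case: n => [|n] in Om X N x0 Omx0 hN hL hA f Xf *.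
  by have := normed_function_space_dim0 hN.
apply/cvgrPdist_le => e e0; near=> rho.
set S := [set _ | _ in _].
have S_ub : ubound S e.
  move=> _ [x _ <-]; move: x; near: rho.
  by have := restr_norm_eball_small hN hL hA Xf e0.
have Sx0 : S (restr_norm N (eball x0 rho `&` Om) f) by exists x0.
rewrite sub0r normrN ger0_norm ?ge_sup //; first exact: (ex_intro _ _ Sx0).
apply: le_trans (restr_norm_ge0 hN hL Xf (leb_measurable_eball x0 rho)) _.
by apply: sup_upper_bound => //; split; [exact: (ex_intro _ _ Sx0) | exists e].
Unshelve. all: end_near.
Qed.
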